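(* Let $S$ be a quasi-tree of a map $\mathcal M$ and let $e,f$ be distinct edges of $\mathcal M$ that are adjacent in $\widetilde{\Lambda}(\mathcal M,S)$. Then $S'=S\triangle\{e,f\}$ is a quasi-tree of $\mathcal M$, and the vertex-colored circle graph $\widetilde{\Lambda}(\mathcal M,S')$ is obtained from $\widetilde{\Lambda}(\mathcal M,S)\wedge ef$ by exchanging the colors of $e$ and $f$. Conversely, if $S\triangle\{e,f\}$ is a quasi-tree of $\mathcal M$ (for distinct edges $e,f$), then $e$ and $f$ are adjacent in $\widetilde{\Lambda}(\mathcal M,S)$.
   Context: A map is a triple $\mathcal M=(B,\sigma,\alpha)$ with $B$ finite, $\sigma,\alpha\in\mathrm{Sym}(B)$, $\alpha$ a fixed-point-free involution, $\langle\sigma,\alpha\rangle$ transitive on $B$. Edges are the cycles of $\alpha$; $\underline b=\{b,\alpha(b)\}$. The tour of a set $F$ of edges is the permutation $\tau$ with $\tau(b)=\sigma(\alpha(b))$ if $\underline b\in F$, $\tau(b)=\sigma(b)$ otherwise; a quasi-tree is a set of edges whose tour is a single cycle on $B$. For a quasi-tree $S$ with tour $\tau$, $\widetilde\Lambda(\mathcal M,S)$ is the chord diagram obtained by placing the flags on a circle in the cyclic order of $\tau$ and joining by a chord the two flags of each edge, the chord of an edge colored $1$ if the edge is in $S$ and $2$ otherwise; it is identified with its circle graph, whose vertices are the edges of $\mathcal M$ (with these colors), two being adjacent iff their chords cross (i.e. their flags alternate around the circle). For a graph $G$ and vertex $v$, the local complementation $G\ast v$ replaces the subgraph induced on the neighbors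 of $v$ by its complement; for an edge $uv$, the pivot is $G\wedge uv=G\ast u\ast v\ast u$. *)

From mathcomp Require Import all_boot all_order all_fingroup.
Set Implicit Arguments. Unset Strict Implicit. Unset Printing Implicit Defensive.

Definition is_map (B : finType) (sigma alpha : {perm B}) : Prop :=
  (forall b : B, alpha (alpha b) = b) /\
  (forall b : B, alpha b != b) /\
  (forall x y : B, exists2 g, g \in <<[set sigma; alpha]>>%g & g x = y).

Definition edge_of (B : finType) (alpha : {perm B}) (b : B) : {set B} :=
  [set b; alpha b].

Definition edges (B : finType) (alpha : {perm B}) : {set {set B}} :=
  [set edge_of alpha b | b : B].

Definition tour (B : finType) (sigma alpha : {perm B}) (F : {set {set B}})
  (b : B) : B :=
  if edge_of alpha b \in F then sigma (alpha b) else sigma b.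

Definition quasi_tree (B : finType) (sigma alpha : {perm B})
  (F : {set {set B}}) : Prop :=
  F \subset edges alpha /\
  (forall x y : B, fconnect (tour sigma alpha F) x y).

(* the circle graph of tilde-Lambda(M,S): two distinct edges x, y are adjacent
   iff their chords cross, i.e. the flags alternate around the circle given by
   the cyclic order of the tour of S. Going around from the flag a of x, exactly
   one of the two flags of y is met before the other flag alpha a of x. *)
Definition circ (B : finType) (sigma alpha : {perm B}) (S : {set {set B}})
  : rel {set B} :=
  fun x y =>
    (x != y) &&
    [exists a : B, [exists b : B,
      [&& x == edge_of alpha a, y == edge_of alpha b &
        (findex (tour sigma alpha S) a b < findex (tour sigma alpha S) a (alpha a))
        != (findex (tour sigma alpha S) a (alpha b)
              < findex (tour sigma alpha S) a (alpha a))]]].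

Definition color (B : finType) (S : {set {set B}}) (x : {set B}) : nat :=
  if x \in S then 1 else 2.

Definition lcomp (T : eqType) (G : rel T) (v : T) : rel T :=
  fun x y => if [&& x != y, G v x & G v y] then ~~ G x y else G x y.

Definition pivot (T : eqType) (G : rel T) (u v : T) : rel T :=
  lcomp (lcomp (lcomp G u) v) u.

Definition swap_color (c : nat) : nat := if c == 1 then 2 else 1.

Definition symdiff (T : finType) (A C : {set T}) : {set T} :=
  (A :\: C) :|: (C :\: A).

From mathcomp Require Import all_boot all_order all_fingroup.
From mathcomp Require Import zify.
Set Implicit Arguments. Unset Strict Implicit. Unset Printing Implicit Defensive.

(* Read the tour of S from a flag a of e as the cyclic word of flags
   a X b Y a' Z b' W (primes denote the other flag of an edge), choosing the
   flag b of f so that b comes before b'.  The tour of S' = S (+) {e, f} is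
   obtained by composing with alpha on the four flags of e and f.  If e and f
   do not cross (a' before b, or a' after b'), this splits off a cycle through
   a that misses a', so S' is not a quasi-tree.  If they cross, the new tour is
   the single cycle a Z b' Y a' X b W: the same blocks in another order.  Two
   chords cross iff an odd number of the four pairs of their ends appear in
   increasing order, so permuting blocks changes crossings by a parity that
   only depends on the blocks holding the ends; a finite check over the arcs
   X, Y, Z, W shows that this change is exactly the pivot on ef. *)

Definition before (T : eqType) (s : seq T) (p q : T) := index p s < index q s.

(* For a strict total order r, the chords {u, u'} and {v, v'} (with four
   distinct ends) cross iff exactly one of v, v' lies between u and u'. *)
Definition crossing (T : Type) (r : rel T) (u u' v v' : T) :=
  r u v (+) r u v' (+) r u' v (+) r u' v'.

Lemma crossing_swapl (T : Type) (r : rel T) u u' v v' :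
  crossing r u' u v v' = crossing r u u' v v'.
Proof.
by rewrite /crossing; case: (r u v); case: (r u v'); case: (r u' v); case: (r u' v').
Qed.

Lemma crossing_swapr (T : Type) (r : rel T) u u' v v' :
  crossing r u u' v' v = crossing r u u' v v'.
Proof.
by rewrite /crossing; case: (r u v); case: (r u v'); case: (r u' v); case: (r u' v').
Qed.

Section Before.
Variables (T : eqType) (s : seq T).

Lemma before_head p q : q != p -> before (p :: s) p q.
Proof. by rewrite /before /= eqxx eq_sym => /negbTE->. Qed.

Lemma before_swap p q : p \in s -> q \in s -> p != q -> before s q p = ~~ before s p q.
Proof.
move=> ps qs npq; rewrite /before ltnNge leq_eqVlt negb_or.
suff -> : index p s != index q s by [].
by apply: contra npq => /eqP/(index_inj p ps qs)->.
Qed.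

Lemma crossing_sym u u' v v' : all [in s] [:: u; u'; v; v'] ->
  u != v -> u != v' -> u' != v -> u' != v' ->
  crossing (before s) v v' u u' = crossing (before s) u u' v v'.
Proof.
move=> /and5P[us u's vs v's _] uv uv' u'v u'v'.
rewrite /crossing (before_swap us vs uv) (before_swap us v's uv').
rewrite (before_swap u's vs u'v) (before_swap u's v's u'v').
by case: (before s u v); case: (before s u v'); case: (before s u' v); case: (before s u' v').
Qed.

End Before.

Section Blocks.
Variable T : eqType.
Implicit Types (L : seq (seq T)) (p q : T).

Definition block L p := find (fun b => p \in b) L.

Definition inner L p q := before (nth [::] L (block L p)) p q.

Definition lex (i j : nat) (b : bool) := if i == j then b else i < j.

Lemma before_flatten L p q :
  before (flatten L) p q = lex (block L p) (block L q) (inner L p q).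
Proof.
elim: L => [|b L IH] //=; rewrite /before /inner /block /= !index_cat.
have := index_mem p b; have := index_mem q b.
case: (p \in b); case: (q \in b) => /= hq hp.
- by rewrite /lex eqxx.
- by rewrite /lex /= (leq_trans hp (leq_addr _ _)).
- by rewrite /lex /= ltnNge (leq_trans (ltnW hq) (leq_addr _ _)).
- by rewrite /lex eqSS ltn_add2l ltnS; exact: IH.
Qed.

Lemma crossing_flatten_blocks L u u' v v' :
  block L u != block L v -> block L u != block L v' ->
  block L u' != block L v -> block L u' != block L v' ->
  crossing (before (flatten L)) u u' v v' =
  crossing ltn (block L u) (block L u') (block L v) (block L v').
Proof. by move=> *; rewrite /crossing !before_flatten /lex !ifN. Qed.

Lemma nth_block L p : p \in flatten L -> p \in nth [::] L (block L p).
Proof.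
case/flattenP=> b bL pb; apply: (@nth_find _ [::] (fun b => p \in b)).
by apply/hasP; exists b.
Qed.

Lemma block_lt L p : p \in flatten L -> block L p < size L.
Proof. by case/flattenP=> b bL pb; rewrite /block -has_find; apply/hasP; exists b. Qed.

Lemma blockE L p k : uniq (flatten L) -> p \in nth [::] L k -> block L p = k.
Proof.
elim: L k => [|b L IH] [|k] //=; rewrite cat_uniq /block /= => /and3P[_ bL uL] pk.
- by rewrite pk.
- have pL : p \in flatten L.
    apply/flattenP; exists (nth [::] L k) => //.
    by rewrite mem_nth // ltnNge; apply: contraL pk => /(nth_default _)->.
  have /negbTE-> : p \notin b by apply: contra bL => pb; apply/hasP; exists p.
  by rewrite -/(block L p) (IH k).
Qed.

End Blocks.

Definition reordered (ks : seq nat) (i j : nat) := (i != j) && ((i < j) != before ks i j).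

Lemma before_flatten_perm (T : eqType) (L : seq (seq T)) ks p q :
  uniq (flatten L) -> p \in flatten L -> q \in flatten L ->
  perm_eq ks (iota 0 (size L)) ->
  before (flatten [seq nth [::] L k | k <- ks]) p q =
  before (flatten L) p q (+) reordered ks (block L p) (block L q).
Proof.
move=> uL pL qL ksP.
have ks_block r : r \in flatten L -> block L r \in ks.
  by move=> rL; rewrite (perm_mem ksP) mem_iota block_lt.
have blockP r :
    r \in flatten L -> block [seq nth [::] L k | k <- ks] r = index (block L r) ks.
  move=> rL; apply: blockE.
    by rewrite (perm_uniq (perm_flatten (perm_map _ ksP))) -/(mkseq _ _) mkseq_nth.
  by rewrite (nth_map 0) ?index_mem ?nth_index ?ks_block ?nth_block.
rewrite !before_flatten /inner !blockP // (nth_map 0) ?index_mem ?nth_index ?ks_block //.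
rewrite /lex /reordered (inj_in_eq (@index_inj _ 0 ks)) ?ks_block //.
by case: eqP => _; rewrite /= ?addbF // /before; case: (_ < _); case: (_ < _).
Qed.

Lemma crossing_flatten_perm (T : eqType) (L : seq (seq T)) ks u u' v v' :
  uniq (flatten L) -> all [in flatten L] [:: u; u'; v; v'] ->
  perm_eq ks (iota 0 (size L)) ->
  crossing (before (flatten [seq nth [::] L k | k <- ks])) u u' v v' =
  crossing (before (flatten L)) u u' v v' (+)
  crossing (reordered ks) (block L u) (block L u') (block L v) (block L v').
Proof.
move=> uL /and5P[uL1 uL2 uL3 uL4 _] ksP.
rewrite /crossing !before_flatten_perm //.
by case: (before _ u v); case: (before _ u v'); case: (before _ u' v); case: (before _ u' v');
  do 4!case: (reordered ks _ _).
Qed.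

Lemma crossing_rot (T : eqType) (s : seq T) n u u' v v' :
  uniq s -> all [in s] [:: u; u'; v; v'] ->
  crossing (before (rot n s)) u u' v v' = crossing (before s) u u' v v'.
Proof.
pose L := [:: take n s; drop n s].
have -> : rot n s = flatten [seq nth [::] L k | k <- [:: 1; 0]] by rewrite /= cats0.
have -> : s = flatten L by rewrite /= cats0 cat_take_drop.
move=> uL inL; rewrite crossing_flatten_perm //.
move: inL => /and5P[/block_lt + /block_lt + /block_lt + /block_lt + _].
by case: (block L u) => [|[|//]]; case: (block L u') => [|[|//]];
  case: (block L v) => [|[|//]]; case: (block L v') => [|[|//]]; rewrite addbF.
Qed.

Section Orbits.
Variables (T : finType) (f : T -> T).
Hypothesis f_conn : forall x y, fconnect f x y.

Lemma mem_orbit_full c p : p \in fingraph.orbit f c.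
Proof. by rewrite -fconnect_orbit. Qed.

Lemma fcycle_orbit c : fcycle f (fingraph.orbit f c).
Proof. by rewrite -fconnect_f. Qed.

Lemma orbit_cons c : exists s, fingraph.orbit f c = c :: s.
Proof. by rewrite /fingraph.orbit -orderSpred /=; eexists. Qed.

Lemma crossing_orbit c d u u' v v' :
  crossing (before (fingraph.orbit f d)) u u' v v' =
  crossing (before (fingraph.orbit f c)) u u' v v'.
Proof.
rewrite (fingraph.orbitE (fcycle_orbit c) (orbit_uniq f c) (mem_orbit_full c d)).
by rewrite crossing_rot ?orbit_uniq //= !mem_orbit_full.
Qed.

End Orbits.

Lemma before_cons (T : eqType) (s : seq T) a p q : p != a -> q != a ->
  before (a :: s) p q = before s p q.
Proof. by rewrite /before /= eq_sym => /negbTE->; rewrite eq_sym => /negbTE->. Qed.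

Section Split.
Variables (T : eqType) (s1 s2 : seq T) (x y : T).
Hypothesis us : uniq (s1 ++ x :: s2).

Lemma index_split : index x (s1 ++ x :: s2) = size s1.
Proof.
move: us; rewrite cat_uniq /= => /and3P[_ /norP[x_s1 _] _].
by rewrite index_cat (negbTE x_s1) /= eqxx addn0.
Qed.

Lemma mem_before_split : before (s1 ++ x :: s2) y x -> y \in s1.
Proof.
rewrite /before index_split index_cat.
by case: (y \in s1) => //; rewrite ltnNge leq_addr.
Qed.

Lemma mem_after_split : y \in s1 ++ x :: s2 -> before (s1 ++ x :: s2) x y -> y \in s2.
Proof.
rewrite /before index_split mem_cat inE => /or3P[ys1|/eqP->|//].
- by rewrite index_cat ys1 ltnNge ltnW // index_mem.
- by rewrite index_split ltnn.
Qed.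

End Split.

Lemma split_before3 (T : eqType) (s : seq T) p q t : uniq s -> q \in s -> t \in s ->
  before s p q -> before s q t -> exists X Y Z W, s = X ++ p :: Y ++ q :: Z ++ t :: W.
Proof.
move=> us qs ts pq qt; case/splitPr: qs => S1 S2 in us ts pq qt *.
case/splitPr: (mem_before_split us pq) => X Y.
case/splitPr: (mem_after_split us ts qt) => Z W.
by exists X, Y, Z, W; rewrite -catA.
Qed.

Variant arrangement (T : Type) (s : seq T) (a a' b b' : T) : bool -> Prop :=
  | ArrangeDisjoint X Y Z W of s = a :: X ++ a' :: Y ++ b :: Z ++ b' :: W :
      arrangement s a a' b b' false
  | ArrangeCrossing X Y Z W of s = a :: X ++ b :: Y ++ a' :: Z ++ b' :: W :
      arrangement s a a' b b' true
  | ArrangeNested X Y Z W of s = a :: X ++ b :: Y ++ b' :: Z ++ a' :: W :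
      arrangement s a a' b b' false.

Lemma arrangementP (T : eqType) (s : seq T) a a' b b' :
  uniq (a :: s) -> all [in s] [:: a'; b; b'] -> a' != b -> a' != b' -> before s b b' ->
  arrangement (a :: s) a a' b b' (crossing (before (a :: s)) a a' b b').
Proof.
rewrite cons_uniq => /andP[a_s us] /and4P[a's bs b's _] a'b a'b' bb'.
have neq_a r : r \in s -> r != a by apply: contraTneq => ->.
rewrite /crossing !before_head ?neq_a // !before_cons ?neq_a //.
have [a'_b | b_a' | /(index_inj a' a's bs)/eqP] := ltngtP (index a' s) (index b s);
  last by rewrite (negbTE a'b).
  rewrite /before a'_b (ltn_trans a'_b bb').
  have [X [Y [Z [W sE]]]] := split_before3 us bs b's a'_b bb'.
  exact: ArrangeDisjoint (congr1 (cons a) sE).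
have -> : before s a' b = false by rewrite /before ltnNge ltnW.
have [a'_b' | b'_a' | /(index_inj a' a's b's)/eqP] := ltngtP (index a' s) (index b' s);
  last by rewrite (negbTE a'b').
  rewrite {1}/before a'_b'.
  have [X [Y [Z [W sE]]]] := split_before3 us a's b's b_a' a'_b'.
  exact: ArrangeCrossing (congr1 (cons a) sE).
rewrite /before ltnNge ltnW //.
have [X [Y [Z [W sE]]]] := split_before3 us b's a's bb' b'_a'.
exact: ArrangeNested (congr1 (cons a) sE).
Qed.

Lemma path_rcons_cat_cons (T : Type) (r : rel T) x M1 y M2 z :
  path r x (rcons (M1 ++ y :: M2) z) = path r x (rcons M1 y) && path r y (rcons M2 z).
Proof. by rewrite rcons_cat cat_path /= !rcons_path !andbA. Qed.

Lemma cycle_cat_cons (T : Type) (r : rel T) a X b W :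
  path.cycle r (a :: X ++ b :: W) = path r a (rcons X b) && path r b (rcons W a).
Proof. exact: path_rcons_cat_cons. Qed.

Lemma cycle_cat_cons4 (T : Type) (r : rel T) a X b Y c Z d W :
  path.cycle r (a :: X ++ b :: Y ++ c :: Z ++ d :: W) =
  [&& path r a (rcons X b), path r b (rcons Y c), path r c (rcons Z d) & path r d (rcons W a)].
Proof. by rewrite /path.cycle !path_rcons_cat_cons. Qed.

Lemma fpath_transfer (T : eqType) (g g' : T -> T) x x' s y :
  g' x' = g x -> {in s, g' =1 g} -> fpath g x (rcons s y) -> fpath g' x' (rcons s y).
Proof.
elim: s x x' => [|m s IH] x x' g'x' eq_s /=; rewrite g'x' // => /andP[-> /=].
by apply: IH => [|z zs]; apply: eq_s; rewrite inE ?eqxx ?zs ?orbT.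
Qed.

Lemma uniq_arcs (T : eqType) (c1 c2 c3 c4 : T) X Y Z W :
  uniq (c1 :: X ++ c2 :: Y ++ c3 :: Z ++ c4 :: W) ->
  {in X ++ Y ++ Z ++ W, forall m, m \notin [:: c1; c2; c3; c4]}.
Proof.
have reorder : perm_eq (c1 :: X ++ c2 :: Y ++ c3 :: Z ++ c4 :: W)
                    ([:: c1; c2; c3; c4] ++ X ++ Y ++ Z ++ W).
  by apply/seq.permP=> P; rewrite /=; do !rewrite count_cat /=; lia.
by rewrite (perm_uniq reorder) cat_uniq => /and3P[_ /hasPn].
Qed.

Section Surgery.
Variables (T : finType) (g g' : T -> T) (p p' q q' : T).
Hypotheses (g'p : g' p = g p') (g'p' : g' p' = g p) (g'q : g' q = g q') (g'q' : g' q' = g q).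
Hypothesis g'_off : forall m, m \notin [:: p; p'; q; q'] -> g' m = g m.

Lemma arcs_agree c1 c2 c3 c4 X Y Z W (s : seq T) :
  uniq (c1 :: X ++ c2 :: Y ++ c3 :: Z ++ c4 :: W) ->
  perm_eq [:: c1; c2; c3; c4] [:: p; p'; q; q'] ->
  {subset s <= X ++ Y ++ Z ++ W} -> {in s, g' =1 g}.
Proof. by move=> /uniq_arcs off cP sub m /sub/off; rewrite (perm_mem cP); apply: g'_off. Qed.

Lemma fcycle_crossing_surgery X Y Z W :
  uniq (p :: X ++ q :: Y ++ p' :: Z ++ q' :: W) ->
  fcycle g (p :: X ++ q :: Y ++ p' :: Z ++ q' :: W) ->
  fcycle g' (p :: Z ++ q' :: Y ++ p' :: X ++ q :: W).
Proof.
move=> u; have agree := arcs_agree u.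
rewrite !cycle_cat_cons4 => /and4P[pX pY pZ pW].
rewrite (fpath_transfer g'p _ pZ) ?(fpath_transfer g'q' _ pY)
  ?(fpath_transfer g'p' _ pX) ?(fpath_transfer g'q _ pW) //.
all: apply: agree => [|m m_arc]; last by rewrite !mem_cat m_arc ?orbT.
all: by rewrite perm_cons (perm_catCA [:: q] [:: p'] [:: q']).
Qed.

Lemma fcycle_disjoint_surgery X Y Z W :
  uniq (p :: X ++ p' :: Y ++ q :: Z ++ q' :: W) ->
  fcycle g (p :: X ++ p' :: Y ++ q :: Z ++ q' :: W) ->
  fcycle g' (p :: Y ++ q :: W).
Proof.
move=> u; have agree := arcs_agree u (perm_refl _).
rewrite cycle_cat_cons4 cycle_cat_cons => /and4P[_ pY _ pW].
rewrite (fpath_transfer g'p _ pY) ?(fpath_transfer g'q _ pW) //.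
all: by apply: agree => m m_arc; rewrite !mem_cat m_arc ?orbT.
Qed.

Lemma fcycle_nested_surgery X Y Z W :
  uniq (p :: X ++ q :: Y ++ q' :: Z ++ p' :: W) ->
  fcycle g (p :: X ++ q :: Y ++ q' :: Z ++ p' :: W) ->
  fcycle g' (p :: W).
Proof.
move=> u; have agree := arcs_agree u.
rewrite cycle_cat_cons4 => /and4P[_ _ _ pW].
apply: (fpath_transfer g'p _ pW); apply: agree => [|m m_arc].
  by rewrite perm_cons (perm_catC [:: q; q'] [:: p']).
by rewrite !mem_cat m_arc ?orbT.
Qed.

Lemma disjoint_surgery_disconnects X Y Z W :
  uniq (p :: X ++ p' :: Y ++ q :: Z ++ q' :: W) ->
  fcycle g (p :: X ++ p' :: Y ++ q :: Z ++ q' :: W) -> ~~ fconnect g' p p'.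
Proof.
move=> u cyc; rewrite (fconnect_cycle (fcycle_disjoint_surgery u cyc)) ?mem_head //.
have reorder : perm_eq (p :: X ++ p' :: Y ++ q :: Z ++ q' :: W)
                       (p' :: (p :: Y ++ q :: W) ++ X ++ Z ++ [:: q']).
  by apply/seq.permP=> P; rewrite /=; do !rewrite count_cat /=; lia.
by move: u; rewrite (perm_uniq reorder) cons_uniq mem_cat negb_or => /andP[/andP[->]].
Qed.

Lemma nested_surgery_disconnects X Y Z W :
  uniq (p :: X ++ q :: Y ++ q' :: Z ++ p' :: W) ->
  fcycle g (p :: X ++ q :: Y ++ q' :: Z ++ p' :: W) -> ~~ fconnect g' p p'.
Proof.
move=> u cyc; rewrite (fconnect_cycle (fcycle_nested_surgery u cyc)) ?mem_head //.
have reorder : perm_eq (p :: X ++ q :: Y ++ q' :: Z ++ p' :: W)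
                       (p' :: (p :: W) ++ X ++ q :: Y ++ q' :: Z).
  by apply/seq.permP=> P; rewrite /=; do !rewrite count_cat /=; lia.
by move: u; rewrite (perm_uniq reorder) cons_uniq mem_cat negb_or => /andP[/andP[->]].
Qed.

End Surgery.

Section Map.
Variables (B : finType) (sigma alpha : {perm B}).
Hypothesis alphaK : involutive alpha.
Local Notation edge := (edge_of alpha).

Lemma edge_ofA u : edge (alpha u) = edge u.
Proof. by rewrite /edge_of alphaK setUC. Qed.

Lemma edge_of_flags u v : edge v = edge u -> v = u \/ v = alpha u.
Proof.
move=> vu; have := set21 v (alpha v); rewrite -/(edge v) vu !inE.
by case/orP=> /eqP; [left | right].
Qed.

Lemma edge_of_neq u v : edge u != edge v ->
  [/\ u != v, u != alpha v, alpha u != v & alpha u != alpha v].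
Proof.
move=> nuv; split; apply: contraNneq nuv => uv.
- by rewrite uv.
- by rewrite uv edge_ofA.
- by rewrite -uv edge_ofA.
- by rewrite -(edge_ofA u) uv edge_ofA.
Qed.

Lemma crossing_edge_of (r : rel B) a b u v : edge a = edge u -> edge b = edge v ->
  crossing r a (alpha a) b (alpha b) = crossing r u (alpha u) v (alpha v).
Proof.
move=> /edge_of_flags[]-> /edge_of_flags[]->; rewrite ?alphaK //.
- exact: crossing_swapr.
- exact: crossing_swapl.
- by rewrite crossing_swapl crossing_swapr.
Qed.

Lemma tour_symdiff S e f p :
  tour sigma alpha (symdiff S [set e; f]) p =
  if edge p \in [set e; f] then tour sigma alpha S (alpha p) else tour sigma alpha S p.
Proof.
rewrite /tour /symdiff edge_ofA alphaK in_setU !in_setD.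
by case: (edge p \in [set e; f]); case: (edge p \in S).
Qed.

Lemma tour_symdiff_flags S a b
    (tau := tour sigma alpha S) (tau' := tour sigma alpha (symdiff S [set edge a; edge b])) :
  [/\ tau' a = tau (alpha a), tau' (alpha a) = tau a, tau' b = tau (alpha b),
      tau' (alpha b) = tau b
    & forall m, m \notin [:: a; alpha a; b; alpha b] -> tau' m = tau m].
Proof.
rewrite /tau' !tour_symdiff !edge_ofA !alphaK !inE !eqxx ?orbT; split=> // m.
rewrite tour_symdiff !inE => m_off; case: ifP => // /orP[] /eqP/edge_of_flags[] m_flag;
  by rewrite m_flag !eqxx ?orbT in m_off.
Qed.

Lemma symdiff_edges (S : {set {set B}}) a b :
  S \subset edges alpha -> symdiff S [set edge a; edge b] \subset edges alpha.
Proof.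
move=> S_edges; rewrite /symdiff subUset !(subset_trans (subsetDl _ _)) //.
by apply/subsetP=> x; rewrite !inE => /orP[]/eqP->; apply: imset_f.
Qed.

Section QuasiTree.
Variable S : {set {set B}}.
Local Notation tau := (tour sigma alpha S).
Hypothesis tau_conn : forall x y, fconnect tau x y.

Lemma crossing_findex a b : edge a != edge b ->
  crossing (before (fingraph.orbit tau a)) a (alpha a) b (alpha b) =
  ((findex tau a b < findex tau a (alpha a)) !=
   (findex tau a (alpha b) < findex tau a (alpha a))).
Proof.
case/edge_of_neq=> ab aab a'b a'b'.
have full x : x \in fingraph.orbit tau a := mem_orbit_full tau_conn a x.
rewrite /crossing (before_swap (full b) (full (alpha a))) 1?eq_sym //.
rewrite (before_swap (full (alpha b)) (full (alpha a))) 1?eq_sym //.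
have [s os] := orbit_cons tau a; rewrite /findex os !before_head 1?eq_sym // /before.
by case: (_ < _); case: (_ < _).
Qed.

Lemma circ_crossing c u v :
  circ sigma alpha S (edge u) (edge v) =
  (edge u != edge v) && crossing (before (fingraph.orbit tau c)) u (alpha u) v (alpha v).
Proof.
rewrite /circ; case: eqP => //= /eqP nuv.
apply/existsP/idP => [[a /existsP[b /and3P[/eqP ua /eqP vb cr]]] | cr].
  rewrite (crossing_orbit tau_conn a) -(crossing_edge_of _ (esym ua) (esym vb)).
  by rewrite crossing_findex // -ua -vb.
exists u; apply/existsP; exists v.
by rewrite !eqxx -crossing_findex // (crossing_orbit tau_conn c).
Qed.

Lemma circ_irr x : circ sigma alpha S x x = false.
Proof. by rewrite /circ eqxx. Qed.

Lemma circC : symmetric (circ sigma alpha S).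
Proof.
suff circ_sym x y : circ sigma alpha S x y -> circ sigma alpha S y x.
  by move=> x y; apply/idP/idP; apply: circ_sym.
move=> /[dup] /andP[_ /existsP[u /existsP[v /and3P[/eqP-> /eqP-> _]]]].
rewrite !(circ_crossing u) => /andP[nuv cr]; rewrite eq_sym nuv.
have [uv uav u'v u'a'v] := edge_of_neq nuv.
by rewrite crossing_sym //; apply/allP=> p _; apply: mem_orbit_full.
Qed.

Lemma circ_arrangement a b : (forall c, alpha c != c) -> edge a != edge b ->
  exists2 b0, edge b0 = edge b & arrangement (fingraph.orbit tau a) a (alpha a) b0 (alpha b0)
                                   (circ sigma alpha S (edge a) (edge b)).
Proof.
move=> alpha_fp; have [s orbit_a] := orbit_cons tau a.
have in_s p : p != a -> p \in s.
  by move=> pa; move: (mem_orbit_full tau_conn a p); rewrite orbit_a inE (negbTE pa).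
wlog bb' : b / before s b (alpha b).
  move=> wl nab; have [ab aab _ _] := edge_of_neq nab.
  have [bb'|b'b] := boolP (before s b (alpha b)); first exact: wl.
  rewrite -(edge_ofA b) in nab *; apply: wl => //.
  by rewrite alphaK before_swap ?in_s 1?eq_sym // alpha_fp.
move=> nab; exists b => //; have [ab aab a'b a'b'] := edge_of_neq nab.
rewrite (circ_crossing a) nab orbit_a; apply: arrangementP => //.
- by rewrite -orbit_a orbit_uniq.
- by apply/allP=> p; rewrite !inE => /or3P[]/eqP->; apply: in_s; rewrite ?alpha_fp // eq_sym.
Qed.

End QuasiTree.
End Map.

Lemma lcompE (T : eqType) (G : rel T) v x y :
  lcomp G v x y = G x y (+) [&& x != y, G v x & G v y].
Proof. by rewrite /lcomp; case: ifP => _; rewrite ?addbT ?addbF. Qed.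

(* Besides exchanging e and f, the pivot toggles adjacency between vertices
   lying in different classes among N(e) \ N(f), N(f) \ N(e) and N(e) & N(f). *)
Lemma pivotE (T : finType) (G : rel T) e f x y :
  irreflexive G -> symmetric G -> G e f ->
  pivot G e f x y =
  G (tperm e f x) (tperm e f y) (+)
  [&& x \notin [:: e; f], y \notin [:: e; f], x != y & (G e x && G f y) (+) (G f x && G e y)].
Proof.
move=> Girr Gsym Gef.
have nef : e != f by apply: contraTneq Gef => ->; rewrite Girr.
have Gfe : G f e by rewrite Gsym.
rewrite /pivot !lcompE !inE.
have [->|nxe] := eqVneq x e; last have [->|nxf] := eqVneq x f;
  (have [->|nye] := eqVneq y e; last have [->|nyf] := eqVneq y f).
all: rewrite ?tpermL ?tpermR ?tpermD 1?eq_sym // ?eqxx ?Girr ?Gef ?Gfe ?(negbTE nef).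
all: rewrite ?(negbTE nxe) ?(negbTE nxf) ?(negbTE nye) ?(negbTE nyf) /= ?andbF ?andbT ?addbF.
all: rewrite ?(eq_sym e x) ?(eq_sym f x) ?nxe ?nxf ?[G x e]Gsym ?[G x f]Gsym /=.
all: by case: (G e x); case: (G f x); case: (G e y); case: (G f y); case: (G x y); case: (y != x).
Qed.

Definition arc_blocks := [:: 1; 3; 5; 7].

(* The tour of S (+) {e, f} visits the blocks [a; X; b; Y; a'; Z; b'; W] of the
   tour of S in this order, i.e. as a Z b' Y a' X b W. *)
Definition exchange_order := [:: 0; 5; 6; 3; 4; 1; 2; 7].

Local Notation exchange_flip := (reordered exchange_order).

Lemma exchange_order_flag_arc i i' : i \in arc_blocks -> i' \in arc_blocks ->
  [/\ crossing ltn 0 4 i i' (+) crossing exchange_flip 0 4 i i' = crossing ltn 2 6 i i',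
      crossing ltn 2 6 i i' (+) crossing exchange_flip 2 6 i i' = crossing ltn 0 4 i i',
      crossing ltn i i' 0 4 (+) crossing exchange_flip i i' 0 4 = crossing ltn i i' 2 6
    & crossing ltn i i' 2 6 (+) crossing exchange_flip i i' 2 6 = crossing ltn i i' 0 4].
Proof. by rewrite !inE => /or4P[]/eqP-> /or4P[]/eqP->. Qed.

Lemma exchange_order_arcs i i' j j' : all [in arc_blocks] [:: i; i'; j; j'] ->
  crossing exchange_flip i i' j j' =
  (crossing ltn 0 4 i i' && crossing ltn 2 6 j j') (+)
  (crossing ltn 2 6 i i' && crossing ltn 0 4 j j').
Proof.
rewrite /= !inE !andbT.
by case/and4P=> /or4P[]/eqP-> /or4P[]/eqP-> /or4P[]/eqP-> /or4P[]/eqP->.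
Qed.

Section CrossingExchange.
Variables (B : finType) (sigma alpha : {perm B}).
Hypothesis alphaK : involutive alpha.
Local Notation edge := (edge_of alpha).
Variables (S : {set {set B}}) (a b : B) (X Y Z W : seq B).
Local Notation tau := (tour sigma alpha S).
Local Notation S' := (symdiff S [set edge a; edge b]).
Local Notation tau' := (tour sigma alpha S').
Hypothesis tau_conn : forall x y, fconnect tau x y.
Hypothesis orbit_tau : fingraph.orbit tau a = a :: X ++ b :: Y ++ alpha a :: Z ++ alpha b :: W.

Let L := [:: [:: a]; X; [:: b]; Y; [:: alpha a]; Z; [:: alpha b]; W].

Local Notation L' := [seq nth [::] L k | k <- exchange_order].

Lemma orbit_tau_blocks : fingraph.orbit tau a = flatten L.
Proof. by rewrite orbit_tau /= cats0. Qed.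

Let uniq_blocks : uniq (flatten L).
Proof. by rewrite -orbit_tau_blocks orbit_uniq. Qed.

Let mem_blocks p : p \in flatten L.
Proof. by rewrite -orbit_tau_blocks mem_orbit_full. Qed.

Let exchange_order_perm : perm_eq exchange_order (iota 0 (size L)).
Proof. by []. Qed.

Let perm_exchange : perm_eq (flatten L) (flatten L').
Proof. by apply: perm_flatten; rewrite -{1}(mkseq_nth [::] L) perm_map // perm_sym. Qed.

Lemma fcycle_tour_symdiff : fcycle tau' (flatten L').
Proof.
have [t1 t2 t3 t4 t_off] := tour_symdiff_flags sigma alphaK S a b.
have cyc := fcycle_orbit tau_conn a; have u := orbit_uniq tau a.
rewrite orbit_tau in cyc u.
by rewrite /= cats0; apply: (fcycle_crossing_surgery t1 t2 t3 t4 t_off u cyc).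
Qed.

Lemma tour_symdiff_conn x y : fconnect tau' x y.
Proof. by rewrite (fconnect_cycle fcycle_tour_symdiff) -(perm_mem perm_exchange). Qed.

Lemma orbit_tour_symdiff : fingraph.orbit tau' a = flatten L'.
Proof.
have u_ex : uniq (flatten L') by rewrite -(perm_uniq perm_exchange).
by rewrite (fingraph.orbitE fcycle_tour_symdiff u_ex) -?(perm_mem perm_exchange) //= eqxx rot0.
Qed.

Lemma block_flags :
  [/\ block L a = 0, block L b = 2, block L (alpha a) = 4 & block L (alpha b) = 6].
Proof. by split; apply: blockE; rewrite ?inE. Qed.

Lemma block_arc u : edge u != edge a -> edge u != edge b -> block L u \in arc_blocks.
Proof.
move=> nua nub; have := nth_block (mem_blocks u); have := block_lt (mem_blocks u).
case: (block L u) => [|[|[|[|[|[|[|[|//]]]]]]]] _ //=; rewrite inE => /eqP ua.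
- by rewrite ua eqxx in nua.
- by rewrite ua eqxx in nub.
- by rewrite ua (edge_ofA alphaK) eqxx in nua.
- by rewrite ua (edge_ofA alphaK) eqxx in nub.
Qed.

Lemma circ_blocks u v : circ sigma alpha S (edge u) (edge v) =
  (edge u != edge v) && crossing (before (flatten L)) u (alpha u) v (alpha v).
Proof. by rewrite (circ_crossing alphaK tau_conn a) orbit_tau_blocks. Qed.

Lemma circ_symdiff_blocks u v : circ sigma alpha S' (edge u) (edge v) =
  circ sigma alpha S (edge u) (edge v) (+) (edge u != edge v) &&
    crossing exchange_flip (block L u) (block L (alpha u)) (block L v) (block L (alpha v)).
Proof.
rewrite (circ_crossing alphaK tour_symdiff_conn a) orbit_tour_symdiff circ_blocks.
by rewrite crossing_flatten_perm //= ?mem_blocks //; case: (_ != _).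
Qed.

Lemma block_arcs v : edge v != edge a -> edge v != edge b ->
  block L v \in arc_blocks /\ block L (alpha v) \in arc_blocks.
Proof. by move=> va vb; rewrite !block_arc ?(edge_ofA alphaK). Qed.

Lemma circ_flag_arc v (i := block L v) (i' := block L (alpha v)) :
  edge v != edge a -> edge v != edge b ->
  [/\ circ sigma alpha S (edge a) (edge v) = crossing ltn 0 4 i i',
      circ sigma alpha S (edge b) (edge v) = crossing ltn 2 6 i i',
      circ sigma alpha S (edge v) (edge a) = crossing ltn i i' 0 4
    & circ sigma alpha S (edge v) (edge b) = crossing ltn i i' 2 6].
Proof.
move=> va vb; have [vi vi'] := block_arcs va vb; have [ba bb ba' bb'] := block_flags.
rewrite !circ_blocks (eq_sym (edge a)) (eq_sym (edge b)) va vb /=.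
rewrite !(crossing_flatten_blocks (L := L)) ?ba ?bb ?ba' ?bb' //.
all: by move: vi vi'; rewrite !inE => /or4P[]/eqP bv /or4P[]/eqP bv'; rewrite ?bv ?bv'.
Qed.

Hypothesis nab : edge a != edge b.

Lemma circ_flags :
  circ sigma alpha S (edge a) (edge b) /\ circ sigma alpha S' (edge a) (edge b).
Proof.
have [ba bb ba' bb'] := block_flags; rewrite circ_symdiff_blocks circ_blocks nab.
by rewrite (crossing_flatten_blocks (L := L)) ?ba ?bb ?ba' ?bb'.
Qed.

Lemma circ_symdiff_exchange v : edge v != edge a -> edge v != edge b ->
  [/\ circ sigma alpha S' (edge a) (edge v) = circ sigma alpha S (edge b) (edge v),
      circ sigma alpha S' (edge b) (edge v) = circ sigma alpha S (edge a) (edge v),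
      circ sigma alpha S' (edge v) (edge a) = circ sigma alpha S (edge v) (edge b)
    & circ sigma alpha S' (edge v) (edge b) = circ sigma alpha S (edge v) (edge a)].
Proof.
move=> va vb; have [i i'] := block_arcs va vb; have [ba bb ba' bb'] := block_flags.
have [c1 c2 c3 c4] := circ_flag_arc va vb.
rewrite !circ_symdiff_blocks c1 c2 c3 c4 ba bb ba' bb'.
rewrite (eq_sym (edge a)) (eq_sym (edge b)) va vb.
by case: (exchange_order_flag_arc i i').
Qed.

Lemma circ_symdiff_arcs u v :
  edge u != edge a -> edge u != edge b -> edge v != edge a -> edge v != edge b ->
  circ sigma alpha S' (edge u) (edge v) =
  circ sigma alpha S (edge u) (edge v) (+) (edge u != edge v) &&
    ((circ sigma alpha S (edge a) (edge u) && circ sigma alpha S (edge b) (edge v)) (+)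
     (circ sigma alpha S (edge b) (edge u) && circ sigma alpha S (edge a) (edge v))).
Proof.
move=> ua ub va vb.
have [iu iu'] := block_arcs ua ub; have [iv iv'] := block_arcs va vb.
have [cau cbu _ _] := circ_flag_arc ua ub; have [cav cbv _ _] := circ_flag_arc va vb.
by rewrite circ_symdiff_blocks cau cbu cav cbv exchange_order_arcs //= iu iu' iv iv'.
Qed.

Lemma circ_symdiff_pivot x y : x \in edges alpha -> y \in edges alpha ->
  circ sigma alpha S' x y = pivot (circ sigma alpha S) (edge a) (edge b) x y.
Proof.
have [Gab G'ab] := circ_flags.
have symG := circC alphaK tau_conn; have symG' := circC alphaK tour_symdiff_conn.
move=> xE yE; rewrite (pivotE _ _ (circ_irr sigma alpha S) symG Gab).
have [-> | nxa] := eqVneq x (edge a); last have [-> | nxb] := eqVneq x (edge b);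
  last case/imsetP: xE nxa nxb => u _ -> ua ub;
  (have [-> | nya] := eqVneq y (edge a); last have [-> | nyb] := eqVneq y (edge b);
  last case/imsetP: yE nya nyb => v _ -> va vb).
all: rewrite ?tpermL ?tpermR ?tpermD ?(eq_sym (edge a)) ?(eq_sym (edge b)) //.
all: rewrite !inE ?eqxx ?orbT ?andbF ?addbF ?circ_irr //.
- by rewrite G'ab symG Gab.
- by case: (circ_symdiff_exchange va vb).
- by rewrite symG' G'ab Gab.
- by case: (circ_symdiff_exchange va vb).
- by case: (circ_symdiff_exchange ua ub).
- by case: (circ_symdiff_exchange ua ub).
by rewrite circ_symdiff_arcs // (negbTE ua) (negbTE ub) (negbTE va) (negbTE vb).
Qed.

End CrossingExchange.

Lemma color_symdiff (B : finType) (S F : {set {set B}}) x :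
  color (symdiff S F) x = if x \in F then swap_color (color S x) else color S x.
Proof. by rewrite /color /symdiff in_setU !in_setD; case: (x \in F); case: (x \in S). Qed.

Theorem lemma8 (B : finType) (sigma alpha : {perm B}) (S : {set {set B}})
  (e f : {set B}) :
  is_map sigma alpha ->
  quasi_tree sigma alpha S ->
  e \in edges alpha -> f \in edges alpha -> e != f ->
  (circ sigma alpha S e f ->
     quasi_tree sigma alpha (symdiff S [set e; f]) /\
     (forall x y, x \in edges alpha -> y \in edges alpha ->
        circ sigma alpha (symdiff S [set e; f]) x y = pivot (circ sigma alpha S) e f x y) /\
     (forall x, x \in edges alpha ->
        color (symdiff S [set e; f]) x =
          (if x \in [set e; f] then swap_color (color S x) else color S x)))
  /\
  (quasi_tree sigma alpha (symdiff S [set e; f]) -> circ sigma alpha S e f).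
Proof.
move=> [alphaK [alpha_fp _]] [S_edges tau_conn] /imsetP[a _ ->] /imsetP[b _ ->] nab.
have [b0 eb0 arr] := circ_arrangement alphaK tau_conn alpha_fp nab.
rewrite -eb0 in nab arr *.
have [t1 _ t3 _ t_off] := tour_symdiff_flags sigma alphaK S a b0.
have u := orbit_uniq (tour sigma alpha S) a; have cyc := fcycle_orbit tau_conn a.
case: arr => X Y Z W orbit_a; rewrite orbit_a in u cyc.
- split=> // [[_ conn]].
  by move: (disjoint_surgery_disconnects t1 t3 t_off u cyc); rewrite conn.
- split=> // _; split.
    by split; [exact: symdiff_edges | exact: tour_symdiff_conn orbit_a].
  split=> [x y|x _]; last exact: color_symdiff.
  exact: (circ_symdiff_pivot alphaK tau_conn orbit_a nab).
- split=> // [[_ conn]].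
  by move: (nested_surgery_disconnects t1 t_off u cyc); rewrite conn.
Qed.
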